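(* Let $\mathbf i=(i_1,\dots,i_N)$ be a reduced expression of $w_0$ whose standard seed satisfies properties (A), (B) and (C). Let $l\in\{1,\dots,N\}$ and assume there exists $m\in\{1,\dots,N\}$ with $i_l\cdot i_m=-1$ and $m_-(\mathbf i)<l<m<l_+(\mathbf i)<m_+(\mathbf i)$. Then $P_l$ divides $\tilde P_l:=\beta_lP_{\mathrm{in}(l)}$.
   Context: $\mathfrak g$ is a complex simple Lie algebra of simply-laced type, vertex set $I=\{1,\dots,n\}$, Cartan entries $i\cdot j$, Weyl group with simple reflections $s_i$, longest element $w_0$, $N=\ell(w_0)$, fundamental weights $\omega_i$. $\overline D:\mathbb C[\mathsf N]\to\mathbb C(\alpha_1,\dots,\alpha_n)$ is the algebra morphism $\overline D(f)=\sum_{\mathbf j}(f,e_{j_1}\cdots e_{j_r})\big(\alpha_{j_1}(\alpha_{j_1}+\alpha_{j_2})\cdots(\alpha_{j_1}+\dots+\alpha_{j_r})\big)^{-1}$ ($\mathbb C[\mathsf N]$ identified with the graded dual of $U(\mathfrak n)$, $e_i$ Chevalley generators, $\alpha_i$ indeterminates). Positive roots are linear forms in the $\alpha_i$; $(\beta;P)$ = multiplicity of $\beta$ in $P$. For a reduced expression $\mathbf i$: $\beta_j=s_{i_1}\cdots s_{i_{j-1}}(\alpha_{i_j})$; $j_-(\mathbf i)=\max(\{l<j:i_l=i_j\}\cup\{0\})$; $j_+(\mathbf i)=\min(\{l>j:i_l=i_j\}\cup\{N+1\})$; $J_{ex}(\mathbf i)=\{j:j_+\le N\}$; flag minors $x_j=D(s_{i_1}\cdots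 s_{i_j}\omega_{i_j},\omega_{i_j})$. The quiver $Q^{\mathbf i}$ on $\{1,\dots,N\}$ has an ordinary arrow $u\to v$ iff $i_u\cdot i_v=-1$ and $u<v<u_+<v_+$, and a horizontal arrow $u_+\to u$ for each $u\in J_{ex}$. For $j\in J_{ex}$, $\mathrm{inord}(j)$ is the set of sources of ordinary arrows into $j$ and $P_{\mathrm{in}(j)}:=P_{j_+}\prod_{l\in\mathrm{inord}(j)}P_l$. Properties: (A) $\overline D(x_j)=1/P_j$ with $P_j$ a product of positive roots, all $j$; (B) $P_jP_{j_-}=\beta_j\prod_{l<j<l_+,\,i_l\cdot i_j=-1}P_l$ for all $j$, with $P_0=1$; (C) $(\beta_i;P_j)-(\beta_i;P_{j_+})\le1$ for all $j\in J_{ex}$, $1\le i\le N$. *)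

From HB Require Import structures.
From mathcomp Require Import all_boot all_order all_algebra.
From mathcomp Require Import mpoly.
Set Implicit Arguments. Unset Strict Implicit. Unset Printing Implicit Defensive.
Import Order.TTheory GRing.Theory Num.Theory.
Local Open Scope ring_scope.

(* The rank is r = n.+1 (vertex set I = 'I_n.+1, i.e. {1..r} shifted to {0..r-1}).
   C : 'M[int]_n.+1 is the Cartan matrix, C i j = i . j. *)

(* C is the Cartan matrix of a simply-laced complex simple Lie algebra
   (types A, D, E): symmetric, 2 on the diagonal, 0/-1 off the diagonal,
   positive definite (finite type) and indecomposable (simple). *)
Definition simply_laced_simple_cartan (n : nat) (C : 'M[int]_n.+1) : Prop :=
  [/\ forall i, C i i = 2,
      forall i j, i != j -> C i j = 0 \/ C i j = -1,
      C^T = C,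
      (forall v : 'rV[rat]_n.+1, v != 0 ->
          0 < (v *m map_mx (fun z : int => z%:~R) C *m v^T) 0 0)
    & forall S : {set 'I_n.+1}, S != set0 -> S != setT ->
          exists i j, [/\ i \in S, j \notin S & C i j != 0] ].

(* Elements of the root lattice: coefficient vectors w.r.t. the simple roots. *)
Definition simple_root (n : nat) (i : 'I_n.+1) : 'rV[int]_n.+1 :=
  \row_k (k == i)%:R.

Definition refl (n : nat) (C : 'M[int]_n.+1) (i : 'I_n.+1) (v : 'rV[int]_n.+1)
  : 'rV[int]_n.+1 := v - (v *m C) 0 i *: simple_root i.

Definition wact (n : nat) (C : 'M[int]_n.+1) (w : seq 'I_n.+1) (v : 'rV[int]_n.+1)
  : 'rV[int]_n.+1 := foldr (refl C) v w.

Definition weq (n : nat) (C : 'M[int]_n.+1) (w w' : seq 'I_n.+1) : Prop :=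
  forall v, wact C w v = wact C w' v.

Definition reduced (n : nat) (C : 'M[int]_n.+1) (w : seq 'I_n.+1) : Prop :=
  forall w', weq C w' w -> (size w <= size w')%N.

(* w is a reduced expression of the longest element w0 of the Weyl group:
   it is reduced and its length is maximal among lengths of Weyl group elements *)
Definition reduced_expr_w0 (n : nat) (C : 'M[int]_n.+1) (w : seq 'I_n.+1) : Prop :=
  reduced C w /\ forall w', reduced C w' -> (size w' <= size w)%N.

Definition positive_root (n : nat) (C : 'M[int]_n.+1) (v : 'rV[int]_n.+1) : Prop :=
  (exists (w : seq 'I_n.+1) (i : 'I_n.+1), wact C w (simple_root i) = v)
  /\ forall k, 0 <= v 0 k.

(* Positions in the word are 1-based: letter j = i_j for 1 <= j <= N = size w *)
Definition letter (n : nat) (w : seq 'I_n.+1) (j : nat) : 'I_n.+1 :=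
  nth ord0 w j.-1.

Definition beta (n : nat) (C : 'M[int]_n.+1) (w : seq 'I_n.+1) (j : nat)
  : 'rV[int]_n.+1 := wact C (take j.-1 w) (simple_root (letter w j)).

Definition jminus (n : nat) (w : seq 'I_n.+1) (j : nat) : nat :=
  \max_(1 <= l < j | letter w l == letter w j) l.

Definition jplus (n : nat) (w : seq 'I_n.+1) (j : nat) : nat :=
  \big[minn/(size w).+1]_(j.+1 <= l < (size w).+1 | letter w l == letter w j) l.

Definition ord_arrow (n : nat) (C : 'M[int]_n.+1) (w : seq 'I_n.+1) (u v : nat)
  : bool :=
  [&& (1 <= u <= size w)%N, (1 <= v <= size w)%N,
      C (letter w u) (letter w v) == -1 &
      [&& (u < v)%N, (v < jplus w u)%N & (jplus w u < jplus w v)%N]].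

Definition inord (n : nat) (C : 'M[int]_n.+1) (w : seq 'I_n.+1) (j : nat)
  : seq nat := [seq u <- iota 1 (size w) | ord_arrow C w u j].

(* a positive root, as a linear form in the indeterminates alpha_k *)
Definition linform (n : nat) (b : 'rV[int]_n.+1) : {mpoly rat[n.+1]} :=
  \sum_(k < n.+1) (b 0 k)%:~R *: 'X_k.

(* P_j, given as the list of its positive-root factors; P_0 = 1 *)
Definition Ppoly (n : nat) (P : nat -> seq 'rV[int]_n.+1) (j : nat)
  : {mpoly rat[n.+1]} :=
  if j is 0 then 1 else \prod_(b <- P j) linform b.

Definition Pin (n : nat) (C : 'M[int]_n.+1) (w : seq 'I_n.+1)
  (P : nat -> seq 'rV[int]_n.+1) (j : nat) : {mpoly rat[n.+1]} :=
  Ppoly P (jplus w j) * \prod_(l <- inord C w j) Ppoly P l.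

(* Property (A) (algebraic part): each P_j, 1 <= j <= N, is a product of
   positive roots. *)
Definition propA (n : nat) (C : 'M[int]_n.+1) (w : seq 'I_n.+1)
  (P : nat -> seq 'rV[int]_n.+1) : Prop :=
  forall j, (1 <= j <= size w)%N -> forall b, b \in P j -> positive_root C b.

Definition propB (n : nat) (C : 'M[int]_n.+1) (w : seq 'I_n.+1)
  (P : nat -> seq 'rV[int]_n.+1) : Prop :=
  forall j, (1 <= j <= size w)%N ->
    Ppoly P j * Ppoly P (jminus w j)
    = linform (beta C w j) *
      \prod_(1 <= l < (size w).+1 |
               [&& (l < j)%N, (j < jplus w l)%N & C (letter w l) (letter w j) == -1])
        Ppoly P l.

Definition propC (n : nat) (C : 'M[int]_n.+1) (w : seq 'I_n.+1)
  (P : nat -> seq 'rV[int]_n.+1) : Prop :=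
  forall j, (1 <= j)%N -> (jplus w j <= size w)%N ->
    forall i, (1 <= i <= size w)%N ->
      (count_mem (beta C w i) (P j) <= count_mem (beta C w i) (P (jplus w j)) + 1)%N.

From Pilot Require Import Defs.
From HB Require Import structures.
From mathcomp Require Import all_boot all_order all_algebra.
From mathcomp Require Import mpoly.
From mathcomp Require Import ring zify.
Import Order.TTheory GRing.Theory Num.Theory.
Local Open Scope ring_scope.
Set Implicit Arguments. Unset Strict Implicit. Unset Printing Implicit Defensive.

(* Vectors v with (v, v) = 2 and positive coordinate sum are never proportional,
   so products of their linear forms factor uniquely (eliminating one variable
   kills exactly one factor).  Hence (B) becomes an identity between the
   multiplicities (g; P_j) of each root g, and P_l | beta_l P_in(l) amounts to
     (g; P_l) <= [beta_l = g] + (g; P_l+) + sum_(u in inord l) (g; P_u).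
   When beta_l or inord(l) contributes, this is (C) (a g that is no beta_i does
   not occur in any P_j).  Otherwise (B) at m gives (g; P_l) <= (g; P_m), and
   (B) at l and at l+ give (g; P_m) <= (g; P_l+), because a k straddling l is
   either a source of an ordinary arrow into l or straddles l+, and m straddles
   l+ but not l.  Beyond (A)-(C), only the symmetry and the diagonal of the
   Cartan matrix are used. *)

Lemma prod_count_le_dvd (R : comPzSemiRingType) (T : eqType) (F : T -> R) (s t : seq T) :
  (forall x, count_mem x s <= count_mem x t)%N ->
  exists q, \prod_(x <- t) F x = \prod_(x <- s) F x * q.
Proof.
case/count_subseqP => s' /perm_to_subseq [r t_s'r] s_s'.
exists (\prod_(x <- r) F x).
by rewrite (perm_big _ t_s'r) big_cat (perm_big _ s_s').
Qed.

Lemma leq_sum_add_cond (I : eqType) (r : seq I) (P1 P2 Q1 Q2 : pred I) (F : I -> nat) :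
  (forall k, k \in r -> P1 k + P2 k <= Q1 k + Q2 k)%N ->
  (\sum_(k <- r | P1 k) F k + \sum_(k <- r | P2 k) F k <=
   \sum_(k <- r | Q1 k) F k + \sum_(k <- r | Q2 k) F k)%N.
Proof.
move=> PQ; rewrite (big_mkcond P1) (big_mkcond P2) (big_mkcond Q1) (big_mkcond Q2).
rewrite -!big_split /= !big_seq; apply: leq_sum => k /PQ.
by case: (P1 k) (P2 k) (Q1 k) (Q2 k) => [] [] [] [] /=; lia.
Qed.

Section LinearForms.
Variable n : nat.
Implicit Types u v : 'rV[int]_n.+1.

Lemma mcoeff_linform v k : (linform v)@_U_(k) = (v 0 k)%:~R.
Proof.
rewrite /linform raddf_sum /= (bigD1 k) //= mcoeffZ mcoeffXU eqxx mulr1.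
rewrite big1 ?addr0 // => i /negbTE ik.
by rewrite mcoeffZ mcoeffXU ik mulr0.
Qed.

Lemma linform_inj : injective (@linform n).
Proof.
move=> u v euv; apply/rowP => k; apply: (@intr_inj rat).
by rewrite -!mcoeff_linform euv.
Qed.

Lemma linformZ a v : linform (a *: v) = a%:~R *: linform v.
Proof.
rewrite /linform scaler_sumr; apply: eq_bigr => i _.
by rewrite !mxE intrM scalerA.
Qed.

Lemma linform_eq0 v : (linform v == 0) = (v == 0).
Proof.
have l0 : linform (0 : 'rV[int]_n.+1) = 0.
  by rewrite /linform big1 // => i _; rewrite mxE scale0r.
by apply/eqP/eqP => [v0|->] //; apply: linform_inj; rewrite v0.
Qed.

Lemma meval_linform1 v : meval (fun _ => 1) (linform v) = (\sum_k v 0 k)%:~R.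
Proof.
rewrite /linform raddf_sum rmorph_sum /=; apply: eq_bigr => i _.
by rewrite mevalZ mevalXU mulr1.
Qed.

(* Eliminates [X_k] using [linform u = 0]; meaningful only when [u 0 k != 0]. *)
Definition kill_linform u k : {mpoly rat[n.+1]} -> {mpoly rat[n.+1]} :=
  comp_mpoly [tuple 'X_i - (((i == k)%:R : rat) / (u 0 k)%:~R) *: linform u | i < n.+1].

Lemma kill_linformE u k v :
  kill_linform u k (linform v) = linform v - ((v 0 k)%:~R / (u 0 k)%:~R) *: linform u.
Proof.
rewrite /kill_linform [linform v]/linform raddf_sum /=.
under eq_bigr => i _ do rewrite comp_mpolyZ comp_mpolyXU -tnth_nth tnth_mktuple
  scalerBr scalerA mulrA.
rewrite sumrB -scaler_suml; congr (_ - _ *: _).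
rewrite (bigD1 k) //= eqxx mulr1 big1 ?addr0 // => i /negbTE ->.
by rewrite mulr0 mul0r.
Qed.

HB.instance Definition _ u k := GRing.RMorphism.on (kill_linform u k).

Lemma kill_linform_eq0 u k v : u 0 k != 0 ->
  (kill_linform u k (linform v) == 0) = (u 0 k *: v == v 0 k *: u).
Proof.
move=> uk0; have uk0' : (u 0 k)%:~R != 0 :> rat by rewrite intr_eq0.
rewrite kill_linformE subr_eq0 -(inj_eq linform_inj) !linformZ.
by rewrite -(inj_eq (scalerI uk0')) scalerA mulrCA divff // mulr1.
Qed.
End LinearForms.

Section UniqueFactorization.
Variable n : nat.
Variable G : 'rV[int]_n.+1 -> Prop.
Hypothesis G_neq0 : forall u, G u -> u != 0.
Hypothesis G_proportional_eq : forall u v (a b : int),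
  G u -> G v -> a != 0 -> a *: u = b *: v -> u = v.

Lemma mem_prod_linform u s1 s2 : G u -> {in s2, forall v, G v} ->
  \prod_(b <- s1) linform b = \prod_(b <- s2) linform b -> u \in s1 -> u \in s2.
Proof.
move=> Gu Gs2 E us1; have /rV0Pn [k uk] := G_neq0 Gu.
have /eqP : kill_linform u k (\prod_(b <- s2) linform b) = 0.
  rewrite -E (big_rem u us1) rmorphM /=.
  by have /eqP -> : kill_linform u k (linform u) == 0; rewrite ?mul0r ?kill_linform_eq0.
rewrite rmorph_prod prodf_seq_eq0 => /hasP [v vs2]; rewrite kill_linform_eq0 // => /eqP e.
by rewrite -(G_proportional_eq (Gs2 v vs2) Gu uk e).
Qed.

Lemma perm_eq_prod_linform s1 s2 : {in s1, forall v, G v} -> {in s2, forall v, G v} ->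
  \prod_(b <- s1) linform b = \prod_(b <- s2) linform b -> perm_eq s1 s2.
Proof.
elim: s1 s2 => [|u s1 IH] s2 Gs1 Gs2 E.
  case: s2 Gs2 E => [//|v s2] Gs2 E.
  have Gv : G v by apply: Gs2; rewrite mem_head.
  by have := mem_prod_linform Gv Gs1 (esym E) (mem_head v s2).
have Gu : G u by apply: Gs1; rewrite mem_head.
have us2 : u \in s2 by apply: (mem_prod_linform Gu Gs2 E); rewrite mem_head.
rewrite perm_sym (perm_trans (perm_to_rem us2)) // perm_cons perm_sym.
apply: IH => [v vs1|v /mem_rem/Gs2 //|]; first by apply: Gs1; rewrite inE vs1 orbT.
apply: (mulfI (_ : linform u != 0)); first by rewrite linform_eq0 G_neq0.
by rewrite -(big_cons 1 *%R u s1 xpredT) E (big_rem u us2).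
Qed.
End UniqueFactorization.

Section CartanForm.
Variables (n : nat) (C : 'M[int]_n.+1).
Implicit Types u v : 'rV[int]_n.+1.

Definition cartan_form u v : int := (u *m C *m v^T) 0 0.

Lemma cartan_formBl u u' v : cartan_form (u - u') v = cartan_form u v - cartan_form u' v.
Proof. by rewrite /cartan_form !mulmxBl !mxE. Qed.

Lemma cartan_formZl a u v : cartan_form (a *: u) v = a * cartan_form u v.
Proof. by rewrite /cartan_form -!scalemxAl !mxE. Qed.

Lemma cartan_form0l v : cartan_form 0 v = 0.
Proof. by rewrite /cartan_form !mul0mx mxE. Qed.

Lemma cartan_form_simple_rootr u i : cartan_form u (simple_root i) = (u *m C) 0 i.
Proof.
rewrite /cartan_form mxE (bigD1 i) //= big1 => [|k /negbTE ki]; rewrite !mxE.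
  by rewrite eqxx mulr1 addr0.
by rewrite ki mulr0.
Qed.

Hypothesis C_sym : C^T = C.

Lemma cartan_formC u v : cartan_form u v = cartan_form v u.
Proof.
rewrite /cartan_form -[in LHS](trmxK (u *m C *m v^T)) [in LHS]mxE.
by rewrite !trmx_mul trmxK C_sym mulmxA.
Qed.

Lemma cartan_formBr u v v' : cartan_form u (v - v') = cartan_form u v - cartan_form u v'.
Proof. by rewrite cartan_formC cartan_formBl !(cartan_formC u). Qed.

Lemma cartan_formZr a u v : cartan_form u (a *: v) = a * cartan_form u v.
Proof. by rewrite cartan_formC cartan_formZl cartan_formC. Qed.

Hypothesis C_diag : forall i, C i i = 2.

Lemma cartan_form_simple_root i : cartan_form (simple_root i) (simple_root i) = 2.
Proof.
rewrite cartan_form_simple_rootr mxE (bigD1 i) //= big1 => [|k /negbTE ki]; rewrite !mxE.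
  by rewrite eqxx mul1r C_diag addr0.
by rewrite ki mul0r.
Qed.

Lemma cartan_form_refl i v :
  cartan_form (refl C i v) (refl C i v) = cartan_form v v.
Proof.
rewrite /refl cartan_formBl !cartan_formBr !cartan_formZl !cartan_formZr.
rewrite cartan_form_simple_root (cartan_formC (simple_root i)) cartan_form_simple_rootr.
ring.
Qed.

Lemma cartan_form_wact ws v : cartan_form (wact C ws v) (wact C ws v) = cartan_form v v.
Proof. by elim: ws => [|i ws IH] //=; rewrite cartan_form_refl. Qed.

Definition pos_norm2 v := cartan_form v v = 2 /\ 0 < \sum_k v 0 k.

Lemma pos_norm2_neq0 v : pos_norm2 v -> v != 0.
Proof. by case=> + _; apply: contra_eqN => /eqP ->; rewrite cartan_form0l. Qed.

Lemma pos_norm2_proportional_eq u v (a b : int) :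
  pos_norm2 u -> pos_norm2 v -> a != 0 -> a *: u = b *: v -> u = v.
Proof.
move=> [nu su] [nv sv] a0 e.
have norms : a * (a * 2) = b * (b * 2).
  have := congr1 (fun x => cartan_form x x) e.
  by rewrite /= !cartan_formZl !cartan_formZr nu nv.
have sums : a * (\sum_k u 0 k) = b * (\sum_k v 0 k).
  have := congr1 (fun x : 'rV_n.+1 => \sum_k x 0 k) e; rewrite /= !mulr_sumr.
  by under eq_bigr do rewrite mxE; under [RHS]eq_bigr do rewrite mxE.
have /orP [/eqP ab|/eqP anb] : (a == b) || (a == - b).
- by rewrite -eqf_sqr -(inj_eq (mulIf (_ : 2 != 0))) // !expr2 -!mulrA norms.
- apply/rowP => k; apply: (mulfI a0).
  by have := congr1 (fun x : 'rV_n.+1 => x 0 k) e; rewrite /= !mxE ab.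
- move: sums; rewrite anb mulNr => /eqP; rewrite eq_sym -subr_eq0 opprK -mulrDr.
  by rewrite mulf_eq0 -oppr_eq0 -anb (negbTE a0) gt_eqF ?addr_gt0.
Qed.

Lemma positive_root_pos_norm2 v : positive_root C v -> pos_norm2 v.
Proof.
move=> [[ws [i e]] ge0].
have n2 : cartan_form v v = 2 by rewrite -e cartan_form_wact cartan_form_simple_root.
split => //; rewrite lt_def sumr_ge0 // andbT; apply/eqP => /psumr_eq0P v0.
have {}v0 : v = 0 by apply/rowP => k; rewrite mxE v0.
by move: n2; rewrite v0 cartan_form0l.
Qed.
End CartanForm.

Section Positions.
Variables (n : nat) (w : seq 'I_n.+1).
Local Notation N := (size w).
Local Open Scope nat_scope.

Lemma jplusP j :
  jplus w j = N.+1 \/ j < jplus w j <= N /\ letter w (jplus w j) = letter w j.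
Proof.
rewrite /jplus big_seq_cond.
apply: (big_ind (fun x => x = N.+1 \/ j < x <= N /\ letter w x = letter w j)) => //.
- by left.
- by move=> x y ? ?; rewrite /minn; case: ltnP.
- by move=> k /andP [+ /eqP]; rewrite mem_index_iota ltnS; right.
Qed.

Lemma jplus_min j k : j < k <= N -> letter w k = letter w j -> jplus w j <= k.
Proof.
move=> /andP [jk kN] /eqP ek.
have : k \in index_iota j.+1 N.+1 by rewrite mem_index_iota jk ltnS.
rewrite /jplus; elim: (index_iota _ _) => // a r IH.
rewrite inE big_cons => /orP [/eqP <-|kr]; first by rewrite ek geq_minl.
by case: ifP => _; rewrite ?geq_min IH ?orbT.
Qed.

Lemma jminusP j :
  jminus w j = 0 \/ 0 < jminus w j < j /\ letter w (jminus w j) = letter w j.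
Proof.
rewrite /jminus big_seq_cond.
apply: (big_ind (fun x => x = 0 \/ 0 < x < j /\ letter w x = letter w j)) => //.
- by left.
- by move=> x y ? ?; rewrite /maxn; case: ltnP.
- by move=> k /andP [+ /eqP]; rewrite mem_index_iota; right.
Qed.

Lemma jminus_max j k : 0 < k < j -> letter w k = letter w j -> k <= jminus w j.
Proof.
by move=> kj /eqP ek; apply: (leq_bigmax_seq (F := id)); rewrite ?mem_index_iota.
Qed.

Lemma jplus_gt j : j <= N -> j < jplus w j.
Proof. by move=> jN; case: (jplusP j) => [->|[/andP []]]. Qed.

Lemma jplus_le j : jplus w j <= N.+1.
Proof. by case: (jplusP j) => [->|[/andP [_ /leqW]]]. Qed.

Lemma letter_jplus j : jplus w j <= N -> letter w (jplus w j) = letter w j.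
Proof. by case: (jplusP j) => [->|[]]; rewrite ?ltnn. Qed.

Lemma jminus_lt j : 0 < j -> jminus w j < j.
Proof. by case: (jminusP j) => [->|[/andP []]]. Qed.

Lemma letter_jminus j : 0 < jminus w j -> letter w (jminus w j) = letter w j.
Proof. by case: (jminusP j) => [->|[]]. Qed.

Lemma jminus_jplus j : 0 < j -> jplus w j <= N -> jminus w (jplus w j) = j.
Proof.
move=> j0 jpN.
have jj : j < jplus w j by case: (jplusP j) jpN => [->|[/andP []]]; rewrite ?ltnn.
have ej := letter_jplus jpN.
apply/eqP; rewrite eqn_leq jminus_max ?j0 ?ej // andbT leqNgt; apply/negP => ltj.
case: (jminusP (jplus w j)) => [e|[/andP [_ lt] e]]; first by rewrite e in ltj.
have := @jplus_min j (jminus w (jplus w j)); rewrite ltj e ej (leq_trans (ltnW lt) jpN).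
by move=> /(_ isT erefl); rewrite leqNgt lt.
Qed.

Lemma jplus_jminus j : 0 < jminus w j -> j <= N -> jplus w (jminus w j) = j.
Proof.
move=> jm0 jN; case: (jminusP j) => [e|[/andP [_ jmj] ej]]; first by rewrite e in jm0.
apply/eqP; rewrite eqn_leq jplus_min ?jmj ?ej //= leqNgt; apply/negP => ltj.
case: (jplusP (jminus w j)) => [e|[/andP [lt _] e]]; first by rewrite e in ltj; lia.
have := @jminus_max j (jplus w (jminus w j)); rewrite ltj e ej (leq_trans _ lt) //.
by move=> /(_ isT erefl); rewrite leqNgt lt.
Qed.
End Positions.

Definition straddles n (C : 'M[int]_n.+1) (w : seq 'I_n.+1) (k j : nat) : bool :=
  [&& (k < j)%N, (j < jplus w k)%N & C (letter w k) (letter w j) == -1].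

(* [P 0] is junk: [Ppoly] reads it as [P_0 = 1]. *)
Definition Pfactors n (P : nat -> seq 'rV[int]_n.+1) (j : nat) : seq 'rV[int]_n.+1 :=
  if j is 0 then [::] else P j.

Lemma Ppoly_Pfactors n (P : nat -> seq 'rV[int]_n.+1) j :
  Ppoly P j = \prod_(b <- Pfactors P j) linform b.
Proof. by case: j => [|j]; rewrite ?big_nil. Qed.

Lemma Pfactors_pos n (P : nat -> seq 'rV[int]_n.+1) j : (0 < j)%N -> Pfactors P j = P j.
Proof. by case: j. Qed.

Section Multiplicities.
Variables (n : nat) (C : 'M[int]_n.+1) (w : seq 'I_n.+1) (P : nat -> seq 'rV[int]_n.+1).
Hypotheses (C_sym : C^T = C) (C_diag : forall i, C i i = 2).
Hypotheses (hA : propA C w P) (hB : propB C w P).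
Local Notation N := (size w).

Definition mult g j := count_mem g (Pfactors P j).

Lemma pos_norm2_Pfactors j b : (j <= N)%N -> b \in Pfactors P j -> pos_norm2 C b.
Proof.
case: j => [//|j] jN bP; apply: positive_root_pos_norm2 => //.
exact: (hA (j := j.+1)).
Qed.

Lemma Ppoly_at1_gt0 j : (j <= N)%N -> 0 < meval (fun _ => 1) (Ppoly P j).
Proof.
move=> jN; rewrite Ppoly_Pfactors rmorph_prod /= big_seq prodr_gt0 // => b bP.
by rewrite meval_linform1 ltr0z; case: (pos_norm2_Pfactors jN bP).
Qed.

Lemma beta_pos_norm2 j : (1 <= j <= N)%N -> pos_norm2 C (beta C w j).
Proof.
move=> /andP [j1 jN]; split; first by rewrite cartan_form_wact // cartan_form_simple_root.
have jmN : (jminus w j <= N)%N by rewrite ltnW // (leq_trans (jminus_lt w j1)).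
have := congr1 (meval (fun _ => 1)) (hB (j := j) _); rewrite j1 jN => /(_ isT).
rewrite !rmorphM rmorph_prod /= meval_linform1 => e.
have := mulr_gt0 (Ppoly_at1_gt0 jN) (Ppoly_at1_gt0 jmN); rewrite e pmulr_lgt0 ?ltr0z //.
rewrite big_seq_cond prodr_gt0 // => k /andP [+ _]; rewrite mem_index_iota ltnS.
by case/andP=> _; apply: Ppoly_at1_gt0.
Qed.

Lemma mult_propB g j : (1 <= j <= N)%N ->
  (mult g j + mult g (jminus w j) =
   (beta C w j == g) + \sum_(1 <= k < N.+1 | straddles C w k j) mult g k)%N.
Proof.
move=> jr; have /andP [j1 jN] := jr.
have jmN : (jminus w j <= N)%N by rewrite ltnW // (leq_trans (jminus_lt w j1)).
set ks := [seq k <- index_iota 1 N.+1 | straddles C w k j].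
have ks_N k : k \in ks -> (k <= N)%N by rewrite mem_filter mem_index_iota ltnS => /and3P [].
have : perm_eq (Pfactors P j ++ Pfactors P (jminus w j))
               (beta C w j :: flatten [seq Pfactors P k | k <- ks]).
  apply: (perm_eq_prod_linform (@pos_norm2_neq0 _ C) (pos_norm2_proportional_eq C_sym)).
  - by move=> b; rewrite mem_cat => /orP [] /pos_norm2_Pfactors; apply.
  - move=> b; rewrite inE => /orP [/eqP ->|]; first exact: beta_pos_norm2.
    by case/flatten_mapP => k /ks_N kN /(pos_norm2_Pfactors kN).
  rewrite big_cat big_cons big_flatten big_map big_filter /= -!Ppoly_Pfactors hB //.
  by under eq_bigr do rewrite Ppoly_Pfactors.
move/permP/(_ (pred1 g)); rewrite count_cat /= count_flatten sumnE !big_map big_filter.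
by move=> ->; rewrite eq_sym.
Qed.

Lemma mult_eq0_notin_beta g :
  (forall i, (1 <= i <= N)%N -> beta C w i != g) ->
  forall j, (j <= N)%N -> mult g j = 0%N.
Proof.
move=> notbeta; elim/ltn_ind => -[//|j] IH jN.
have jr : (1 <= j.+1 <= N)%N by rewrite jN.
have := mult_propB g jr; rewrite (negbTE (notbeta _ jr)) add0n big1_seq.
  by move/eqP; rewrite addn_eq0 => /andP [/eqP].
move=> k /andP [/andP [kj _] _]; apply: IH => //.
exact: leq_trans (ltnW kj) jN.
Qed.
End Multiplicities.

Section Proposition.
Variables (n : nat) (C : 'M[int]_n.+1) (w : seq 'I_n.+1) (P : nat -> seq 'rV[int]_n.+1).
Hypotheses (C_sym : C^T = C) (C_diag : forall i, C i i = 2).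
Hypotheses (hA : propA C w P) (hB : propB C w P) (hC : propC C w P).
Local Notation N := (size w).
Local Notation mult := (mult P).
Local Open Scope nat_scope.

Lemma C_symE i j : C i j = C j i.
Proof. by rewrite -[in LHS]C_sym mxE. Qed.

Lemma straddles_jplus k l : 1 <= k <= N -> 1 <= l <= N -> jplus w l <= N ->
  straddles C w k l -> ~~ ord_arrow C w k l -> straddles C w k (jplus w l).
Proof.
move=> kr lr lpN /and3P [kl lkp Ckl] not_arrow.
have jpkl : jplus w l <= jplus w k.
  by rewrite leqNgt; apply: contra not_arrow => kpl; rewrite /ord_arrow kr lr Ckl kl lkp.
have letter_lp := letter_jplus lpN.
have : jplus w k != jplus w l.
  apply: contraTneq Ckl => eq_jp; have := @letter_jplus _ w k; rewrite eq_jp => /(_ lpN).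
  by rewrite letter_lp => <-; rewrite C_diag.
rewrite neq_ltn ltnNge jpkl /= => lpk.
rewrite /straddles letter_lp Ckl lpk andbT (ltn_trans kl) // jplus_gt //.
by case/andP: lr.
Qed.

Variables l m : nat.
Hypotheses (hl : 1 <= l <= N) (hm : 1 <= m <= N).
Hypothesis Clm : C (letter w l) (letter w m) = (-1)%R.
Hypotheses (mml : jminus w m < l) (lm : l < m) (mlp : m < jplus w l).
Hypothesis lpmp : jplus w l < jplus w m.

Let inord_mult g := \sum_(u <- Defs.inord C w l) mult g u.

Lemma inord_multE g : inord_mult g = \sum_(1 <= k < N.+1 | ord_arrow C w k l) mult g k.
Proof. by rewrite /inord_mult big_filter /index_iota subn1. Qed.

Lemma jplus_l_le : jplus w l <= N.
Proof. by rewrite -ltnS (leq_trans lpmp) // jplus_le. Qed.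

Lemma mult_l_le_m g : mult g l <= mult g m + inord_mult g.
Proof.
apply: (@leq_trans (mult g m + mult g (jminus w m))).
  rewrite (mult_propB C_sym C_diag hA hB g hm) (big_rem l) ?mem_index_iota ?ltnS //=.
  by rewrite /straddles lm mlp Clm eqxx /= addnCA leq_addr.
rewrite leq_add2l; case: (posnP (jminus w m)) => [-> //|mm0].
have mmN : jminus w m <= N by rewrite (leq_trans (ltnW mml)) //; case/andP: hl.
rewrite inord_multE (big_rem (jminus w m)) ?mem_index_iota ?ltnS ?mm0 //=.
rewrite /ord_arrow mm0 mmN (letter_jminus mm0) C_symE Clm jplus_jminus //.
  by rewrite mml lm mlp hl eqxx leq_addr.
by case/andP: hm.
Qed.

Lemma mult_m_le g :
  mult g m + mult g (jminus w l) + (beta C w (jplus w l) == g) <=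
  inord_mult g + mult g (jplus w l) + (beta C w l == g).
Proof.
have lp_r : 1 <= jplus w l <= N by rewrite jplus_l_le (leq_ltn_trans _ mlp).
have B_l := mult_propB C_sym C_diag hA hB g hl.
have B_lp := mult_propB C_sym C_diag hA hB g lp_r.
rewrite jminus_jplus ?jplus_l_le //= in B_lp; last by case/andP: hl.
have split : \sum_(1 <= k < N.+1 | straddles C w k l) mult g k + mult g m <=
    inord_mult g + \sum_(1 <= k < N.+1 | straddles C w k (jplus w l)) mult g k.
  have -> : mult g m = \sum_(1 <= k < N.+1 | k == m) mult g k.
    by rewrite -big_filter filter_pred1_uniq ?iota_uniq ?mem_index_iota ?ltnS ?big_seq1.
  rewrite inord_multE; apply: leq_sum_add_cond => k; rewrite mem_index_iota ltnS => kr.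
  have [->|km] := eqVneq k m.
    rewrite /straddles (leq_gtF (ltnW lm)) mlp lpmp (letter_jplus jplus_l_le).
    by rewrite C_symE Clm eqxx /= leq_addl.
  rewrite addn0; case: (boolP (straddles C w k l)) => // skl.
  by case: (boolP (ord_arrow C w k l)) => // /(straddles_jplus kr hl jplus_l_le skl) ->.
lia.
Qed.

Lemma mult_l_le_beta_Pin g :
  mult g l <= (beta C w l == g) + mult g (jplus w l) + inord_mult g.
Proof.
have [/eqP|pos] := posnP (inord_mult g + (beta C w l == g)).
  rewrite addn_eq0 => /andP [/eqP I0 /eqP b0].
  by have := mult_l_le_m g; have := mult_m_le g; lia.
have [/hasP [i ir /eqP gE]|/hasPn not_beta] :=
  boolP (has (fun i => beta C w i == g) (index_iota 1 N.+1)).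
  have l0 : 0 < l by case/andP: hl.
  move: ir; rewrite mem_index_iota ltnS => /(hC l0 jplus_l_le).
  by rewrite gE /mult !Pfactors_pos ?(leq_ltn_trans _ mlp) //; lia.
have -> // : mult g l = 0.
apply: (mult_eq0_notin_beta C_sym C_diag hA hB); last by case/andP: hl.
by move=> i ir; apply: not_beta; rewrite mem_index_iota ltnS.
Qed.

Lemma Ppoly_dvd_beta_Pin : exists Q, (linform (beta C w l) * Pin C w P l = Ppoly P l * Q)%R.
Proof.
set t := beta C w l :: Pfactors P (jplus w l) ++
  flatten [seq Pfactors P u | u <- Defs.inord C w l].
have [Q eQ] : exists Q,
    (\prod_(b <- t) linform b = \prod_(b <- Pfactors P l) linform b * Q)%R.
  apply: prod_count_le_dvd => g; have := mult_l_le_beta_Pin g.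
  by rewrite /= count_cat count_flatten sumnE !big_map addnA.
rewrite /Pin !Ppoly_Pfactors; exists Q; rewrite -eQ big_cons big_cat big_flatten big_map /=.
by congr (_ * (_ * _))%R; apply: eq_bigr => u _; rewrite Ppoly_Pfactors.
Qed.
End Proposition.

Unset Implicit Arguments.

Theorem proposition6p6 (n : nat) (C : 'M[int]_n.+1) (w : seq 'I_n.+1)
    (P : nat -> seq 'rV[int]_n.+1) (l m : nat) :
  simply_laced_simple_cartan C ->
  reduced_expr_w0 C w ->
  propA C w P -> propB C w P -> propC C w P ->
  (1 <= l <= size w)%N -> (1 <= m <= size w)%N ->
  C (letter w l) (letter w m) = -1 ->
  (jminus w m < l)%N -> (l < m)%N -> (m < jplus w l)%N -> (jplus w l < jplus w m)%N ->
  exists Q : {mpoly rat[n.+1]},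
    linform (beta C w l) * Pin C w P l = Ppoly P l * Q.
Proof.
move=> [C_diag _ C_sym _ _] _ hA hB hC hl hm Clm mml lm mlp lpmp.
exact: (Ppoly_dvd_beta_Pin C_sym C_diag hA hB hC hl hm Clm mml lm mlp lpmp).
Qed.
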